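(* Let $(M_1,\circ_1)$ and $(M_2,\circ_2)$ be fuzzy $\Gamma$-hypersemigroups and let $(M_i,\ast_i)$ be the associated $\Gamma$-hypersemigroups, given by $a\ast_i\gamma\ast_i b=\{x\in M_i:(a\circ_i\gamma\circ_i b)(x)>0\}$. If $f:M_1\to M_2$ is a homomorphism of fuzzy $\Gamma$-hypersemigroups, then $f$ is a homomorphism of the associated $\Gamma$-hypersemigroups, i.e. $f(a\ast_1\gamma\ast_1 b)\subseteq f(a)\ast_2\gamma\ast_2 f(b)$ for all $a,b\in M_1$, $\gamma\in\Gamma$.
   Context: $\Gamma$ is a nonempty set, common to both structures. A fuzzy subset of $M$ is a map $M\to[0,1]$; a fuzzy $\Gamma$-hyperoperation on $M$ assigns to each $(a,\gamma,b)\in M\times\Gamma\times M$ a fuzzy subset $a\circ\gamma\circ b$; for $a\in M$ and fuzzy $\mu\ne0$, $(a\circ\gamma\circ\mu)(r)=\bigvee_{t}((a\circ\gamma\circ t)(r)\wedge\mu(t))$ and $(\mu\circ\gamma\circ a)(r)=\bigvee_t(\mu(t)\wedge(t\circ\gamma\circ a)(r))$ (both $0$ if $\mu=0$). $(M,\circ)$ is a fuzzy $\Gamma$-hypersemigroup if $(a\circ\alpha\circ b)\circ\beta\circ c=a\circ\alpha\circ(b\circ\beta\circ c)$ for all $a,b,c,\alpha,\beta$. For a map $f:M_1\to M_2$ and fuzzy subset $\mu$ of $M_1$, $f(\mu)$ is the fuzzy subset of $M_2$ with $f(\mu)(t)=\bigvee_{r\in f^{-1}(t)}\mu(r)$ if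 $f^{-1}(t)\ne\emptyset$ and $0$ otherwise. For fuzzy sets $\mu_1\le\mu_2$ means $\mu_1(m)\le\mu_2(m)$ for all $m$. $f$ is a homomorphism of fuzzy $\Gamma$-hypersemigroups if $f(a\circ_1\gamma\circ_1 b)\le f(a)\circ_2\gamma\circ_2 f(b)$ for all $a,b\in M_1$, $\gamma\in\Gamma$. *)

From mathcomp Require Import all_boot all_order all_algebra.
From mathcomp Require Import all_classical all_reals.
Set Implicit Arguments. Unset Strict Implicit. Unset Printing Implicit Defensive.
Import Order.TTheory GRing.Theory Num.Theory.
Local Open Scope classical_set_scope.
Local Open Scope ring_scope.

Definition fuzzy_subset (R : realType) (M : Type) (mu : M -> R) : Prop :=
  forall m, 0 <= mu m <= 1.

Definition fuzzy_Ghyperop (R : realType) (M G : Type) (op : M -> G -> M -> M -> R) : Prop :=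
  forall a g b, fuzzy_subset (op a g b).

Definition fcompl (R : realType) (M G : Type) (op : M -> G -> M -> M -> R)
  (a : M) (g : G) (mu : M -> R) : M -> R :=
  fun r => if pselect (mu = (fun _ => 0)) then 0
           else sup [set Num.min (op a g t r) (mu t) | t in [set: M]].

Definition fcompr (R : realType) (M G : Type) (op : M -> G -> M -> M -> R)
  (mu : M -> R) (g : G) (a : M) : M -> R :=
  fun r => if pselect (mu = (fun _ => 0)) then 0
           else sup [set Num.min (mu t) (op t g a r) | t in [set: M]].

Definition fuzzy_Ghypersemigroup (R : realType) (M G : Type) (op : M -> G -> M -> M -> R) : Prop :=
  fuzzy_Ghyperop op /\
  forall a b c (al be : G), fcompr op (op a al b) be c = fcompl op a al (op b be c).

Definition fimage (R : realType) (M1 M2 : Type) (f : M1 -> M2) (mu : M1 -> R) : M2 -> R :=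
  fun t => if pselect (exists r, f r = t) then sup [set mu r | r in f @^-1` [set t]]
           else 0.

Definition fuzzy_hom (R : realType) (M1 M2 G : Type)
  (op1 : M1 -> G -> M1 -> M1 -> R) (op2 : M2 -> G -> M2 -> M2 -> R) (f : M1 -> M2) : Prop :=
  forall a b g m, fimage f (op1 a g b) m <= op2 (f a) g (f b) m.

Definition assoc_hyperop (R : realType) (M G : Type) (op : M -> G -> M -> M -> R)
  (a : M) (g : G) (b : M) : set M := [set x | 0 < op a g b x].

From mathcomp Require Import all_boot all_order all_algebra.
From mathcomp Require Import all_classical all_reals.
Import Order.TTheory GRing.Theory Num.Theory.
Local Open Scope classical_set_scope.
Local Open Scope ring_scope.

(* The bound by 1 is needed: [sup] of a set with no upper bound is a junk value. *)
Lemma fimage_ge {R : realType} {M1 M2 : Type} (f : M1 -> M2) (mu : M1 -> R) :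
  fuzzy_subset mu -> forall x, mu x <= fimage f mu (f x).
Proof.
move=> mu01 x; rewrite /fimage.
case: (pselect (exists r, f r = f x)) => /= [_ | nofx]; last by case: nofx; exists x.
have ub1 : has_ubound [set mu r | r in f @^-1` [set f x]].
  by exists 1 => _ [r _ <-]; case/andP: (mu01 r).
by apply: (ub_le_sup ub1); exists x.
Qed.

Lemma fuzzy_hom_le {R : realType} {M1 M2 G : Type}
  {op1 : M1 -> G -> M1 -> M1 -> R} {op2 : M2 -> G -> M2 -> M2 -> R} {f : M1 -> M2} :
  fuzzy_Ghyperop op1 -> fuzzy_hom op1 op2 f ->
  forall a b g x, op1 a g b x <= op2 (f a) g (f b) (f x).
Proof.
move=> op1_fuzzy hf a b g x.
apply: le_trans (hf a b g (f x)).
exact: fimage_ge.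
Qed.

Theorem theorem4p22 (R : realType) (G M1 M2 : Type) (hG : inhabited G)
  (op1 : M1 -> G -> M1 -> M1 -> R) (op2 : M2 -> G -> M2 -> M2 -> R)
  (h1 : fuzzy_Ghypersemigroup op1) (h2 : fuzzy_Ghypersemigroup op2)
  (f : M1 -> M2) (hf : fuzzy_hom op1 op2 f) :
  forall (a b : M1) (g : G),
    f @` assoc_hyperop op1 a g b `<=` assoc_hyperop op2 (f a) g (f b).
Proof.
move=> a b g _ [x x_pos <-]; rewrite /assoc_hyperop /=.
exact: lt_le_trans x_pos (fuzzy_hom_le h1.1 hf a b g x).
Qed.
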